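(* Let $K$ be a triangle and $\mathcal B(K)=\{\mathbf v\in[P^4(K)]^2:\mathbf v=\mathbf 0\text{ on }\partial K\}$. If $\mathbf v\in\mathcal B(K)$ and $\operatorname{div}\mathbf v=0$, then $\mathbf v=\mathbf 0$.
   Context: For a triangle $K\subset\mathbb R^2$ and $k\ge0$, $P^k(K)$ denotes the set of functions which coincide with a polynomial of degree at most $k$ on $K$ and vanish outside $K$. *)

From HB Require Import structures.
From mathcomp Require Import all_boot all_order all_algebra.
From mathcomp Require Import mpoly.
Set Implicit Arguments. Unset Strict Implicit. Unset Printing Implicit Defensive.
Import Order.TTheory GRing.Theory Num.Theory.
Local Open Scope ring_scope.

Section Defs.
Variable R : realFieldType.

Definition pt (x : R * R) : 'I_2 -> R :=
  fun i => if val i == 0%N then x.1 else x.2.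

Definition comb3 (l1 l2 l3 : R) (a b c : R * R) : R * R :=
  (l1 * a.1 + l2 * b.1 + l3 * c.1, l1 * a.2 + l2 * b.2 + l3 * c.2).

Definition nondeg_triangle (a b c : R * R) : Prop :=
  (b.1 - a.1) * (c.2 - a.2) - (b.2 - a.2) * (c.1 - a.1) != 0.

Definition in_triangle (a b c x : R * R) : Prop :=
  exists l1 l2 l3 : R, [/\ 0 <= l1, 0 <= l2, 0 <= l3, l1 + l2 + l3 = 1
                          & x = comb3 l1 l2 l3 a b c].

Definition in_segment (p q x : R * R) : Prop :=
  exists t : R, [/\ 0 <= t, t <= 1 & x = comb3 (1 - t) t 0 p q q].

Definition on_boundary (a b c x : R * R) : Prop :=
  in_segment a b x \/ in_segment b c x \/ in_segment c a x.

Definition deg_le (k : nat) (p : {mpoly R[2]}) : bool := (msize p <= k.+1)%N.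

Definition div2 (p1 p2 : {mpoly R[2]}) : {mpoly R[2]} :=
  mderiv ord0 p1 + mderiv (@Ordinal 2 1 isT) p2.

End Defs.

From HB Require Import structures.
From mathcomp Require Import all_boot all_order all_algebra.
From mathcomp Require Import mpoly.
From mathcomp Require Import ring lra zify.
Import Order.TTheory GRing.Theory Num.Theory.
Local Open Scope ring_scope.
Set Implicit Arguments. Unset Strict Implicit. Unset Printing Implicit Defensive.

(* The affine map F(s, t) = a + s (b - a) + t (c - a) sends the reference
   triangle (0,0), (1,0), (0,1) onto K, and the Piola transform
   u = adj(DF) (v o F) of v is again a quartic field, vanishes on the boundary
   of the reference triangle and satisfies div u = det(DF) (div v) o F; since
   det(DF) != 0, v = 0 as soon as u = 0.  On the reference triangle the
   coefficients of u are read off edge by edge: vanishing on the legs gives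
   u1 = x y r1 and u2 = x y r2; div u restricted to the legs is y r1(0, y) and
   x r2(x, 0); vanishing on the hypotenuse then leaves
   u1 = A x^2 y (1 - x - y) and u2 = B x y^2 (1 - x - y); and on the
   hypotenuse div u = - x y (A x + B y), so A = B = 0. *)

Local Notation ordy := (@Ordinal 2 1 isT).

Section MPolySize.
Variables (R : idomainType) (n k : nat).
Implicit Types (p q : {mpoly R[n]}).

Lemma msizeM_le_pred p q : (msize (p * q) <= (msize p + msize q).-1)%N.
Proof.
have [->|nz_p] := eqVneq p 0; first by rewrite mul0r msize0.
have [->|nz_q] := eqVneq q 0; first by rewrite mulr0 msize0.
by rewrite msizeM.
Qed.

Lemma msize_exp_affine q e : (msize q <= 2)%N -> (msize (q ^+ e) <= e.+1)%N.
Proof.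
move=> hq; elim: e => [|e ih]; first by rewrite expr0 msize1.
by rewrite exprS (leq_trans (msizeM_le_pred _ _)) //; lia.
Qed.

Lemma msize_comp_affine (p : {mpoly R[k]}) (lq : k.-tuple {mpoly R[n]}) :
  (forall i, msize (tnth lq i) <= 2)%N -> (msize (p \mPo lq) <= msize p)%N.
Proof.
move=> hlq; rewrite comp_mpolyE (leq_trans (mmeasure_sum _ _ _ _)) //.
apply/bigmax_leqP_seq => m /msize_mdeg_lt hm _.
rewrite (leq_trans (msizeZ_le _ _)) // (leq_trans _ hm) // mdegE.
elim/big_rec2: _ => [|i e r _ ih]; first by rewrite msize1.
rewrite (leq_trans (msizeM_le_pred _ _)) //.
have := msize_exp_affine (m i) (hlq i); lia.
Qed.
End MPolySize.

Section MPolyDeriv.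
Variables (R : comNzRingType) (n : nat).

Lemma msize_mderiv (p : {mpoly R[n]}) i : (msize p^`M(i) <= (msize p).-1)%N.
Proof.
rewrite msizeE; apply/bigmax_leqP_seq => m; rewrite mcoeff_msupp mcoeff_mderiv => nz _.
have /msize_mdeg_lt : (m + U_(i))%MM \in msupp p.
  by rewrite mcoeff_msupp; apply: contraNneq nz => ->; rewrite mul0rn.
by rewrite mdegD mdeg1 addn1 -ltn_predRL.
Qed.

Lemma mderivXU (i j : 'I_n) : ('X_j : {mpoly R[n]})^`M(i) = ((j == i)%:R)%:MP.
Proof.
rewrite mderivX mnm1E; case: eqP => [->|_]; last by rewrite scale0r mpolyC0.
by rewrite -[X in (X - _)%MM]add0m addmK mpolyX0 scale1r.
Qed.
End MPolyDeriv.

Section MPolyComp.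
Variables (R : comNzRingType) (n k l : nat) (lq : k.-tuple {mpoly R[n]}).

Lemma comp_mpolyA (p : {mpoly R[k]}) (lr : n.-tuple {mpoly R[l]}) :
  (p \mPo lq) \mPo lr = p \mPo [tuple tnth lq i \mPo lr | i < k].
Proof.
rewrite [p]mpolyE; elim: (msupp p) => [|m s ih]; first by rewrite !big_nil !comp_mpoly0.
rewrite !big_cons !comp_mpolyD ih !comp_mpolyZ !comp_mpolyX rmorph_prod; congr (_ *: _ + _).
by apply: eq_bigr => i _; rewrite rmorphXn tnth_mktuple.
Qed.

Let chain_rule_at (p : {mpoly R[k]}) := forall i,
  (p \mPo lq)^`M(i) = \sum_(j < k) (p^`M(j) \mPo lq) * (tnth lq j)^`M(i).

Let chain_ruleD p q : chain_rule_at p -> chain_rule_at q -> chain_rule_at (p + q).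
Proof.
move=> hp hq i; rewrite comp_mpolyD mderivD hp hq -big_split /=.
by apply: eq_bigr => j _; rewrite mderivD comp_mpolyD mulrDl.
Qed.

Let chain_ruleZ c p : chain_rule_at p -> chain_rule_at (c *: p).
Proof.
move=> hp i; rewrite comp_mpolyZ mderivZ hp scaler_sumr /=.
by apply: eq_bigr => j _; rewrite mderivZ comp_mpolyZ scalerAl.
Qed.

Let chain_ruleM p q : chain_rule_at p -> chain_rule_at q -> chain_rule_at (p * q).
Proof.
move=> hp hq i; rewrite rmorphM /= mderivM hp hq mulr_suml mulr_sumr -big_split /=.
by apply: eq_bigr => j _; rewrite mderivM comp_mpolyD !rmorphM /=; ring.
Qed.

Let chain_rule0 : chain_rule_at 0.
Proof.
by move=> i; rewrite comp_mpoly0 mderiv0 big1 // => j _; rewrite mderiv0 comp_mpoly0 mul0r.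
Qed.

Let chain_rule1 : chain_rule_at 1.
Proof.
move=> i; rewrite comp_mpoly1 -mpolyC1 mderivC big1 // => j _.
by rewrite mderivC comp_mpolyC mul0r.
Qed.

Let chain_ruleX j : chain_rule_at 'X_j.
Proof.
move=> i; rewrite comp_mpolyXU (bigD1 j) //= big1 ?addr0 => [|j' nj'j].
  by rewrite mderivXU eqxx comp_mpolyC mpolyC1 mul1r -tnth_nth.
by rewrite mderivXU eq_sym (negbTE nj'j) comp_mpolyC mpolyC0 mul0r.
Qed.

Lemma mderiv_comp (p : {mpoly R[k]}) i :
  (p \mPo lq)^`M(i) = \sum_(j < k) (p^`M(j) \mPo lq) * (tnth lq j)^`M(i).
Proof.
suff /(_ i) : chain_rule_at p by [].
rewrite [p]mpolyE; apply: (big_ind chain_rule_at chain_rule0 chain_ruleD) => m _.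
rewrite mpolyXE_id; apply/chain_ruleZ/(big_ind chain_rule_at chain_rule1 chain_ruleM) => j _.
elim: (m j) => [|e ih]; first by rewrite expr0.
by rewrite exprS; exact: chain_ruleM (chain_ruleX j) ih.
Qed.
End MPolyComp.

Section Plane.
Variable R : realFieldType.

Lemma sum_ord2 (V : nmodType) (F : 'I_2 -> V) : \sum_(i < 2) F i = F ord0 + F ordy.
Proof. by rewrite big_ord_recl big_ord1; congr (_ + F _); apply: val_inj. Qed.

Definition mnm2 (i j : nat) : 'X_{1..2} :=
  [multinom (if val k == 0%N then i else j) | k < 2].

Lemma mnm2_eta (m : 'X_{1..2}) : m = mnm2 (m ord0) (m ordy).
Proof. by apply/mnmP => -[[|[|//]] ?]; rewrite mnmE //=; congr (m _); apply: val_inj. Qed.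

Lemma eq_mnm2 i j i' j' : (mnm2 i j == mnm2 i' j') = (i == i') && (j == j').
Proof.
apply/eqP/andP => [e|[/eqP-> /eqP->]] //.
by have := congr1 (fun m : 'X_{1..2} => (m ord0, m ordy)) e; rewrite !mnmE /= => -[-> ->].
Qed.

Lemma mdeg_mnm2 i j : mdeg (mnm2 i j) = (i + j)%N.
Proof. by rewrite mdegE !big_ord_recl big_ord0 !mnmE addn0. Qed.

Lemma meval_mnm2 i j x : ('X_[mnm2 i j] : {mpoly R[2]}).@[pt x] = x.1 ^+ i * x.2 ^+ j.
Proof. by rewrite mevalX !big_ord_recl big_ord0 mulr1 !mnmE. Qed.

Definition peval2 (k : nat) (c : nat -> nat -> R) (x : R * R) : R :=
  \sum_(i < k) \sum_(j < k - i) c i j * (x.1 ^+ i * x.2 ^+ j).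

Lemma mpoly2E k (p : {mpoly R[2]}) : (msize p <= k)%N ->
  p = \sum_(i < k) \sum_(j < k - i) p@_(mnm2 i j) *: 'X_[mnm2 i j].
Proof.
move=> hp; apply/mpolyP => m; rewrite [m]mnm2_eta raddf_sum /=; symmetry.
set i := m ord0; set j := m ordy.
transitivity (\sum_(i' < k | i' == i :> nat) \sum_(j' < k - i' | j' == j :> nat) p@_(mnm2 i' j')).
  rewrite [RHS]big_mkcond; apply: eq_bigr => i' _; rewrite raddf_sum /=.
  have [ei|ne] := eqVneq (i' : nat) i; last first.
    by rewrite big1 // => j' _; rewrite mcoeffZ mcoeffX eq_mnm2 (negbTE ne) mulr0.
  rewrite [RHS]big_mkcond; apply: eq_bigr => j' _.
  rewrite mcoeffZ mcoeffX eq_mnm2 (introT eqP ei) /=.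
  by case: eqP; rewrite ?mulr1 ?mulr0.
rewrite (big_ord1_eq _ (fun n => \sum_(j' < k - n | j' == j :> nat) p@_(mnm2 n j'))).
case: ltnP => hi; last first.
  by apply/esym/memN_msupp_eq0/msize_mdeg_ge; rewrite mdeg_mnm2; lia.
rewrite (big_ord1_eq _ (fun n => p@_(mnm2 i n))); case: ltnP => hj //.
by apply/esym/memN_msupp_eq0/msize_mdeg_ge; rewrite mdeg_mnm2; lia.
Qed.

Lemma meval2E k (p : {mpoly R[2]}) x : (msize p <= k)%N ->
  p.@[pt x] = peval2 k (fun i j => p@_(mnm2 i j)) x.
Proof.
move=> /mpoly2E {1}->; rewrite raddf_sum; apply: eq_bigr => i _.
by rewrite raddf_sum /=; apply: eq_bigr => j _; rewrite mevalZ meval_mnm2.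
Qed.

Lemma mpoly2_eq0 k (p : {mpoly R[2]}) : (msize p <= k)%N ->
  (forall i j, (i + j < k)%N -> p@_(mnm2 i j) = 0) -> p = 0.
Proof.
move=> hp hz; rewrite (mpoly2E hp) big1 // => i _; rewrite big1 // => j _.
by rewrite hz ?scale0r // -ltn_subRL.
Qed.

Lemma mnm2_addUx i j : (mnm2 i j + U_(ord0))%MM = mnm2 i.+1 j.
Proof. by apply/mnmP => -[[|[|//]] ?]; rewrite !mnmE /= ?addn0 ?addn1. Qed.

Lemma mnm2_addUy i j : (mnm2 i j + U_(ordy))%MM = mnm2 i j.+1.
Proof. by apply/mnmP => -[[|[|//]] ?]; rewrite !mnmE /= ?addn0 ?addn1. Qed.

Lemma mcoeff_div2 (p q : {mpoly R[2]}) i j :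
  (div2 p q)@_(mnm2 i j) = p@_(mnm2 i.+1 j) *+ i.+1 + q@_(mnm2 i j.+1) *+ j.+1.
Proof. by rewrite mcoeffD !mcoeff_mderiv mnm2_addUx mnm2_addUy !mnmE. Qed.

Lemma msize_div2 k (p q : {mpoly R[2]}) : (msize p <= k.+1)%N -> (msize q <= k.+1)%N ->
  (msize (div2 p q) <= k)%N.
Proof.
move=> hp hq; apply: leq_trans (msizeD_le _ _) _.
by rewrite geq_max !(leq_trans (msize_mderiv _ _)) // -subn1 leq_subLR.
Qed.

Definition aff2 (u v w : R) : {mpoly R[2]} := u%:MP + v *: 'X_ord0 + w *: 'X_ordy.

Lemma meval_aff2 u v w x : (aff2 u v w).@[pt x] = u + v * x.1 + w * x.2.
Proof. by rewrite !mevalD mevalC !mevalZ !mevalXU. Qed.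

Lemma msize_aff2 u v w : (msize (aff2 u v w) <= 2)%N.
Proof.
have msizeZX i t : (msize (t *: 'X_i : {mpoly R[2]}) <= 2)%N.
  by rewrite (leq_trans (msizeZ_le _ _)) // msizeX mdeg1.
rewrite (leq_trans (msizeD_le _ _)) // geq_max msizeZX andbT.
by rewrite (leq_trans (msizeD_le _ _)) // geq_max msizeZX msizeC (leq_trans (leq_b1 _)).
Qed.

Lemma mderiv_aff2x u v w : (aff2 u v w)^`M(ord0) = v%:MP.
Proof.
rewrite !mderivD mderivC !mderivZ !mderivXU /= -!mul_mpolyC -!mpolyCM.
by rewrite mulr1 mulr0 mpolyC0 ?add0r ?addr0.
Qed.

Lemma mderiv_aff2y u v w : (aff2 u v w)^`M(ordy) = w%:MP.
Proof.
rewrite !mderivD mderivC !mderivZ !mderivXU /= -!mul_mpolyC -!mpolyCM.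
by rewrite mulr1 mulr0 mpolyC0 ?add0r ?addr0.
Qed.

Lemma comp_aff2 u v w (lq : 2.-tuple {mpoly R[2]}) :
  aff2 u v w \mPo lq = u%:MP + v *: tnth lq ord0 + w *: tnth lq ordy.
Proof. by rewrite !comp_mpolyD comp_mpolyC !comp_mpolyZ !comp_mpolyXU -!tnth_nth. Qed.

Lemma aff2_combine u v w u0 v0 w0 u1 v1 w1 :
  u%:MP + v *: aff2 u0 v0 w0 + w *: aff2 u1 v1 w1 =
  aff2 (u + v * u0 + w * u1) (v * v0 + w * v1) (v * w0 + w * w1).
Proof. by rewrite /aff2 -!mul_mpolyC !mpolyCD !mpolyCM; ring. Qed.

Lemma aff2_Xx : aff2 0 1 0 = 'X_ord0.
Proof. by rewrite /aff2 mpolyC0 scale1r scale0r add0r addr0. Qed.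

Lemma aff2_Xy : aff2 0 0 1 = 'X_ordy.
Proof. by rewrite /aff2 mpolyC0 scale1r scale0r !add0r. Qed.
End Plane.

Section ReferenceTriangle.
Variable R : realFieldType.

Lemma quartic_coef_eq0 (a0 a1 a2 a3 a4 : R) :
  (forall s, 0 < s < 1 -> a0 + a1 * s + a2 * s ^+ 2 + a3 * s ^+ 3 + a4 * s ^+ 4 = 0) ->
  [/\ a0 = 0, a1 = 0, a2 = 0, a3 = 0 & a4 = 0].
Proof.
move=> h.
have := h (1/6) ltac:(lra); have := h (1/3) ltac:(lra); have := h (1/2) ltac:(lra).
have := h (2/3) ltac:(lra); have := h (5/6) ltac:(lra).
move=> *; split; lra.
Qed.

Definition edges_eq0 (k : nat) (c : nat -> nat -> R) : Prop :=
  forall s, 0 < s < 1 ->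
    [/\ peval2 k c (s, 0) = 0, peval2 k c (0, s) = 0 & peval2 k c (s, 1 - s) = 0].

Lemma legs_coef_eq0 (c : nat -> nat -> R) : edges_eq0 5 c ->
  [/\ c 0 0 = 0, c 1 0 = 0, c 2 0 = 0, c 3 0 = 0 & c 4 0 = 0] /\
  [/\ c 0 1 = 0, c 0 2 = 0, c 0 3 = 0 & c 0 4 = 0].
Proof.
move=> hc; split.
  apply: quartic_coef_eq0 => s /hc[ev _ _].
  by rewrite -[RHS]ev /peval2 !big_ord_recr !big_ord0 /=; ring.
have [_ *] : [/\ c 0 0 = 0, c 0 1 = 0, c 0 2 = 0, c 0 3 = 0 & c 0 4 = 0].
  apply: quartic_coef_eq0 => s /hc[_ ev _].
  by rewrite -[RHS]ev /peval2 !big_ord_recr !big_ord0 /=; ring.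
by split.
Qed.

Lemma ref_coef (c d g : nat -> nat -> R) :
  (forall i j, g i j = c i.+1 j *+ i.+1 + d i j.+1 *+ j.+1) ->
  edges_eq0 5 c -> edges_eq0 5 d -> edges_eq0 4 g ->
  forall i j, (i + j < 5)%N -> c i j = 0 /\ d i j = 0.
Proof.
move=> hg hc hd hdiv.
have [[c00 c10 c20 c30 c40] [c01 c02 c03 c04]] := legs_coef_eq0 hc.
have [[d00 d10 d20 d30 d40] [d01 d02 d03 d04]] := legs_coef_eq0 hd.
pose legs := (c00, c10, c20, c30, c40, c01, c02, c03, c04,
              (d00, d10, d20, d30, d40, d01, d02, d03, d04)).
have [_ d11 d21 d31 _] : [/\ 0 = 0 :> R, d 1 1 = 0, d 2 1 = 0, d 3 1 = 0 & 0 = 0 :> R].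
  apply: quartic_coef_eq0 => s /hdiv[ev _ _].
  by rewrite -[RHS]ev /peval2 !big_ord_recr !big_ord0 /= !hg ?legs; ring.
have [_ c11 c12 c13 _] : [/\ 0 = 0 :> R, c 1 1 = 0, c 1 2 = 0, c 1 3 = 0 & 0 = 0 :> R].
  apply: quartic_coef_eq0 => s /hdiv[_ ev _].
  by rewrite -[RHS]ev /peval2 !big_ord_recr !big_ord0 /= !hg ?legs; ring.
have [_ _ c21 _ c31] : [/\ 0 = 0 :> R, 0 = 0 :> R, c 2 1 + c 2 2 = 0,
                          c 3 1 - c 2 1 - 2 * c 2 2 = 0 & c 2 2 - c 3 1 = 0].
  apply: quartic_coef_eq0 => s /hc[_ _ ev].
  by rewrite -[RHS]ev /peval2 !big_ord_recr !big_ord0 /= ?legs c11 c12 c13; ring.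
have [_ d12 _ _ d22] : [/\ 0 = 0 :> R, d 1 2 + d 1 3 = 0, d 2 2 - d 1 3 - 2 * (d 1 2 + d 1 3) = 0,
                          d 1 2 + d 1 3 - 2 * (d 2 2 - d 1 3) = 0 & d 2 2 - d 1 3 = 0].
  apply: quartic_coef_eq0 => s /hd[_ _ ev].
  by rewrite -[RHS]ev /peval2 !big_ord_recr !big_ord0 /= ?legs d11 d21 d31; ring.
move/eqP: c21; rewrite addr_eq0 => /eqP c21.
move/eqP: d12; rewrite addr_eq0 => /eqP d12.
move/subr0_eq/esym: c31 => c31; move/subr0_eq: d22 => d22.
have [_ d13 c22 _ _] : [/\ 0 = 0 :> R, d 1 3 = 0, c 2 2 - 2 * d 1 3 = 0,
                          d 1 3 - c 2 2 = 0 & 0 = 0 :> R].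
  apply: quartic_coef_eq0 => s /hdiv[_ _ ev].
  rewrite -[RHS]ev /peval2 !big_ord_recr !big_ord0 /= !hg ?legs.
  by rewrite c11 c12 c13 d11 d21 d31 c21 c31 d12 d22; ring.
move: c22; rewrite d13 mulr0 subr0 => c22.
move=> i j hij; do 5?[case: i hij => [|i] hij]; do 5?[case: j hij => [|j] hij] => //;
  by rewrite ?legs ?(c11, c12, c13, d11, d21, d31, c21, c31, d12, d22) ?(c22, d13) ?oppr0.
Qed.

Lemma on_boundary_in_triangle (a b c x : R * R) : on_boundary a b c x -> in_triangle a b c x.
Proof.
case=> [|[]] [t [t0 t1 ->]].
- by exists (1 - t), t, 0; split; [lra..|rewrite /comb3; congr pair; ring].
- by exists 0, (1 - t), t; split; [lra..|rewrite /comb3; congr pair; ring].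
- by exists t, 0, (1 - t); split; [lra..|rewrite /comb3; congr pair; ring].
Qed.

Lemma on_boundary_ref (s : R) : 0 < s < 1 ->
  [/\ on_boundary (0, 0) (1, 0) (0, 1) (s, 0), on_boundary (0, 0) (1, 0) (0, 1) (0, s)
    & on_boundary (0, 0) (1, 0) (0, 1) (s, 1 - s)].
Proof.
move=> hs; split.
- by left; exists s; split; [lra|lra|rewrite /comb3 /=; congr pair; ring].
- by right; right; exists (1 - s); split; [lra|lra|rewrite /comb3 /=; congr pair; ring].
- by right; left; exists (1 - s); split; [lra|lra|rewrite /comb3 /=; congr pair; ring].
Qed.

Lemma div_free_ref_triangle (u1 u2 : {mpoly R[2]}) :
  deg_le 4 u1 -> deg_le 4 u2 ->
  (forall x, on_boundary (0, 0) (1, 0) (0, 1) x -> u1.@[pt x] = 0 /\ u2.@[pt x] = 0) ->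
  (forall x, in_triangle (0, 0) (1, 0) (0, 1) x -> (div2 u1 u2).@[pt x] = 0) ->
  u1 = 0 /\ u2 = 0.
Proof.
rewrite /deg_le => hu1 hu2 hb hdiv.
have hdiv_size := msize_div2 hu1 hu2.
have z : forall i j, (i + j < 5)%N -> u1@_(mnm2 i j) = 0 /\ u2@_(mnm2 i j) = 0.
  apply: (@ref_coef _ _ (fun i j => (div2 u1 u2)@_(mnm2 i j)) (mcoeff_div2 u1 u2)).
  - move=> s /on_boundary_ref[/hb[h1 _] /hb[h2 _] /hb[h3 _]].
    by split; rewrite -meval2E.
  - move=> s /on_boundary_ref[/hb[_ h1] /hb[_ h2] /hb[_ h3]].
    by split; rewrite -meval2E.
  - move=> s /on_boundary_ref[/on_boundary_in_triangle/hdiv h1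
      /on_boundary_in_triangle/hdiv h2 /on_boundary_in_triangle/hdiv h3].
    by split; rewrite -meval2E.
by split; [apply: (mpoly2_eq0 hu1) | apply: (mpoly2_eq0 hu2)] => i j /z[].
Qed.
End ReferenceTriangle.

Section TrianglePullback.
Variables (R : realFieldType) (a b c : R * R).
Local Notation jdet := ((b.1 - a.1) * (c.2 - a.2) - (b.2 - a.2) * (c.1 - a.1)).

Definition tri_map : 2.-tuple {mpoly R[2]} :=
  [tuple aff2 a.1 (b.1 - a.1) (c.1 - a.1); aff2 a.2 (b.2 - a.2) (c.2 - a.2)].

Definition tri_map_inv : 2.-tuple {mpoly R[2]} :=
  [tuple aff2 (((c.1 - a.1) * a.2 - (c.2 - a.2) * a.1) / jdet)
              ((c.2 - a.2) / jdet) (- (c.1 - a.1) / jdet);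
         aff2 (((b.2 - a.2) * a.1 - (b.1 - a.1) * a.2) / jdet)
              (- (b.2 - a.2) / jdet) ((b.1 - a.1) / jdet)].

Definition tri_pt (x : R * R) : R * R := comb3 (1 - x.1 - x.2) x.1 x.2 a b c.

Lemma meval_comp_tri_map p x : (p \mPo tri_map).@[pt x] = p.@[pt (tri_pt x)].
Proof.
rewrite comp_mpoly_meval; apply: meval_eq => -[[|[|//]] ?];
  by rewrite (tnth_nth 0) /= meval_aff2 /pt /tri_pt /comb3 /=; ring.
Qed.

Lemma comp_tri_map_inv p : jdet != 0 -> (p \mPo tri_map) \mPo tri_map_inv = p.
Proof.
move=> nz; rewrite comp_mpolyA -[RHS]comp_mpoly_id; congr (p \mPo _).
apply: eq_from_tnth => -[[|[|//]] ?]; rewrite !tnth_mktuple (tnth_nth 0) /= comp_aff2 aff2_combine.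
  by rewrite -aff2_Xx; congr aff2; field.
by rewrite -aff2_Xy; congr aff2; field.
Qed.

Lemma tri_pt_comb3 l1 l2 l3 p q r : l1 + l2 + l3 = 1 ->
  tri_pt (comb3 l1 l2 l3 p q r) = comb3 l1 l2 l3 (tri_pt p) (tri_pt q) (tri_pt r).
Proof.
move=> hl; have -> : l1 = 1 - l2 - l3 by rewrite -hl; ring.
by rewrite /tri_pt /comb3 /=; congr pair; ring.
Qed.

Lemma tri_pt_ref : [/\ tri_pt (0, 0) = a, tri_pt (1, 0) = b & tri_pt (0, 1) = c].
Proof. by rewrite /tri_pt /comb3; case: a b c => [? ?] [? ?] [? ?] /=; split; congr pair; ring. Qed.

Lemma in_segment_tri_pt p q x : in_segment p q x -> in_segment (tri_pt p) (tri_pt q) (tri_pt x).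
Proof. by case=> t [t0 t1 ->]; exists t; split; rewrite // tri_pt_comb3 //; ring. Qed.

Lemma on_boundary_tri_pt x : on_boundary (0, 0) (1, 0) (0, 1) x -> on_boundary a b c (tri_pt x).
Proof.
have [ea eb ec] := tri_pt_ref.
by case=> [|[]] /in_segment_tri_pt; rewrite ?ea ?eb ?ec => h; [left | right; left | right; right].
Qed.

Lemma in_triangle_tri_pt x : in_triangle (0, 0) (1, 0) (0, 1) x -> in_triangle a b c (tri_pt x).
Proof.
have [ea eb ec] := tri_pt_ref.
case=> l1 [l2 [l3 [h1 h2 h3 hl ->]]]; exists l1, l2, l3.
by split; rewrite // tri_pt_comb3 // ea eb ec.
Qed.

(* adj(DF) (v o F) for F = tri_map: the contravariant Piola transform times det DF. *)
Definition piola1 (v1 v2 : {mpoly R[2]}) : {mpoly R[2]} :=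
  (c.2 - a.2) *: (v1 \mPo tri_map) - (c.1 - a.1) *: (v2 \mPo tri_map).

Definition piola2 (v1 v2 : {mpoly R[2]}) : {mpoly R[2]} :=
  (b.1 - a.1) *: (v2 \mPo tri_map) - (b.2 - a.2) *: (v1 \mPo tri_map).

Lemma mderiv_comp_tri_map p :
  (p \mPo tri_map)^`M(ord0) =
    (b.1 - a.1) *: (p^`M(ord0) \mPo tri_map) + (b.2 - a.2) *: (p^`M(ordy) \mPo tri_map) /\
  (p \mPo tri_map)^`M(ordy) =
    (c.1 - a.1) *: (p^`M(ord0) \mPo tri_map) + (c.2 - a.2) *: (p^`M(ordy) \mPo tri_map).
Proof.
rewrite !mderiv_comp !sum_ord2 (tnth_nth 0) /= !mderiv_aff2x !mderiv_aff2y.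
by rewrite ![_ * _%:MP]mulrC !mul_mpolyC.
Qed.

Lemma div2_piola v1 v2 : div2 (piola1 v1 v2) (piola2 v1 v2) = jdet *: (div2 v1 v2 \mPo tri_map).
Proof.
have [d1x d1y] := mderiv_comp_tri_map v1; have [d2x d2y] := mderiv_comp_tri_map v2.
rewrite /div2 /piola1 /piola2 !mderivB !mderivZ d1x d1y d2x d2y comp_mpolyD.
move: (v1^`M(ord0) \mPo tri_map) (v1^`M(ordy) \mPo tri_map) => p1 p2.
move: (v2^`M(ord0) \mPo tri_map) (v2^`M(ordy) \mPo tri_map) => q1 q2.
by rewrite -!mul_mpolyC !mpolyCB !mpolyCM; ring.
Qed.

Lemma meval_piola v1 v2 x : v1.@[pt (tri_pt x)] = 0 -> v2.@[pt (tri_pt x)] = 0 ->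
  (piola1 v1 v2).@[pt x] = 0 /\ (piola2 v1 v2).@[pt x] = 0.
Proof.
rewrite -!meval_comp_tri_map /piola1 /piola2.
move: (v1 \mPo tri_map) (v2 \mPo tri_map) => w1 w2 z1 z2.
by rewrite !mevalB !mevalZ z1 z2 !mulr0 subr0.
Qed.

Lemma msize_piola v1 v2 k : (msize v1 <= k)%N -> (msize v2 <= k)%N ->
  (msize (piola1 v1 v2) <= k)%N /\ (msize (piola2 v1 v2) <= k)%N.
Proof.
have hmap i : (msize (tnth tri_map i) <= 2)%N.
  by case: i => -[|[|//]] ?; rewrite (tnth_nth 0) /= msize_aff2.
move=> /(leq_trans (msize_comp_affine _ hmap)) + /(leq_trans (msize_comp_affine _ hmap)).
rewrite /piola1 /piola2; move: (v1 \mPo tri_map) (v2 \mPo tri_map) => w1 w2 h1 h2.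
by split; rewrite (leq_trans (msizeD_le _ _)) // geq_max msizeN !(leq_trans (msizeZ_le _ _)).
Qed.

Lemma piola_eq0 v1 v2 : jdet != 0 -> piola1 v1 v2 = 0 -> piola2 v1 v2 = 0 -> v1 = 0 /\ v2 = 0.
Proof.
move=> nz hp1 hp2.
have w1 : v1 \mPo tri_map = 0.
  apply: (scalerI nz); rewrite scaler0.
  transitivity ((b.1 - a.1) *: piola1 v1 v2 + (c.1 - a.1) *: piola2 v1 v2).
    by rewrite /piola1 /piola2 -!mul_mpolyC !mpolyCB !mpolyCM; ring.
  by rewrite hp1 hp2 !scaler0 addr0.
have w2 : v2 \mPo tri_map = 0.
  apply: (scalerI nz); rewrite scaler0.
  transitivity ((b.2 - a.2) *: piola1 v1 v2 + (c.2 - a.2) *: piola2 v1 v2).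
    by rewrite /piola1 /piola2 -!mul_mpolyC !mpolyCB !mpolyCM; ring.
  by rewrite hp1 hp2 !scaler0 addr0.
by rewrite -(comp_tri_map_inv v1 nz) -(comp_tri_map_inv v2 nz) w1 w2 comp_mpoly0.
Qed.
End TrianglePullback.

Theorem lemma3p1 (R : realFieldType) (a b c : R * R) (v1 v2 : {mpoly R[2]}) :
  nondeg_triangle a b c ->
  deg_le 4 v1 -> deg_le 4 v2 ->
  (forall x, on_boundary a b c x -> v1.@[pt x] = 0 /\ v2.@[pt x] = 0) ->
  (forall x, in_triangle a b c x -> (div2 v1 v2).@[pt x] = 0) ->
  v1 = 0 /\ v2 = 0.
Proof.
move=> nd hv1 hv2 hb hdiv.
have [hu1 hu2] := msize_piola a b c hv1 hv2.
have [||u1 u2] := div_free_ref_triangle hu1 hu2; last exact: piola_eq0 nd u1 u2.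
- by move=> x /(on_boundary_tri_pt a b c) /hb[]; apply: meval_piola.
- move=> x /(in_triangle_tri_pt a b c) /hdiv z.
  by rewrite div2_piola mevalZ meval_comp_tri_map z mulr0.
Qed.
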